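(* Define polynomials $P_0(x)=x$ and $P_{j+1}(x)=-\big[(j+1)xP_j(x)+(1-x^2)P_j'(x)\big]$ for $j\ge0$. Then for every $j\ge0$ and every $x\in\mathbb{R}\setminus\mathbb{Z}$, $$P_j(\cos\pi x)=\pi^{-j}\sin^{j+1}(\pi x)\,\frac{d^j}{dx^j}\cot(\pi x).$$ *)

From mathcomp Require Import all_boot all_order all_algebra.
From mathcomp Require Import all_classical all_reals all_analysis.
Set Implicit Arguments. Unset Strict Implicit. Unset Printing Implicit Defensive.
Import Order.TTheory GRing.Theory Num.Theory.
Local Open Scope ring_scope.

Fixpoint Ppoly (R : realType) (j : nat) : {poly R} :=
  match j with
  | 0%N => 'X
  | j'.+1 => - ((j'.+1)%:R *: ('X * Ppoly R j') + (1 - 'X ^+ 2) * (Ppoly R j')^`())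
  end.

Definition cotpi (R : realType) (x : R) : R := cos (pi * x) / sin (pi * x).

(* Put f_j(y) = pi^j P_j(cos (pi y)) / sin(pi y)^(j+1). Then f_0 = cot(pi .), and the
   recursion defining P_(j+1) is exactly what the quotient rule produces for f_j' once
   cos^2 is replaced by 1 - sin^2, so f_j' = f_(j+1) wherever sin(pi y) <> 0.  That set
   is open and consists of the non-integers, hence f_j is the j-th derivative of
   cot(pi .) there. *)
From mathcomp Require Import all_boot all_order all_algebra.
From mathcomp Require Import all_classical all_reals all_analysis.
From mathcomp Require Import ring.
Import Order.TTheory GRing.Theory Num.Theory.
Import numFieldNormedType.Exports.
Local Open Scope ring_scope.

Section ScaledTrigonometry.
Context {R : realType}.
Implicit Types a b x y : R.

Lemma is_derive_mul_cst a y : is_derive y 1 ( *%R a) a.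
Proof. by apply: is_derive_eq; rewrite -[RHS]mulr1. Qed.

Lemma is_derive_sin_scale a y :
  is_derive y 1 (fun z => sin (a * z)) (cos (a * y) * a).
Proof. exact: is_derive1_comp (is_derive_mul_cst a y). Qed.

Lemma is_derive_cos_scale a y :
  is_derive y 1 (fun z => cos (a * z)) (- sin (a * y) * a).
Proof. exact: is_derive1_comp (is_derive_mul_cst a y). Qed.

Lemma continuous_sin_scale a : continuous (fun z => sin (a * z)).
Proof.
by move=> y; apply: continuous_comp; [exact: mulrl_continuous | exact: continuous_sin].
Qed.

Lemma norm_sinDpi_int b (k : int) : `|sin (b + pi * k%:~R)| = `|sin b|.
Proof.
case: k => n.
  by rewrite -pmulrn mulr_natr (alternatingn (@sinDpi R)) normrM normr_sign mul1r.
have -> : sin b = (-1) ^+ n.+1 * sin (b + pi * (Negz n)%:~R).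
  by rewrite -(alternatingn (@sinDpi R)) NegzE mulrNz mulrN -mulr_natr -addrA addNr addr0.
by rewrite normrM normr_sign mul1r.
Qed.

Lemma sin_pi_neq0 x : (forall k : int, x != k%:~R) -> sin (pi * x) != 0.
Proof.
move=> x_notint; set k := Num.floor x.
have /andP[kx xk1] := floor_itv x; rewrite intrD in xk1.
have t_pos : 0 < x - k%:~R by rewrite subr_gt0 lt_neqAle kx eq_sym x_notint.
have t_lt1 : x - k%:~R < 1 by rewrite ltrBlDl.
have sin_t : 0 < sin (pi * (x - k%:~R)).
  by apply: sin_gt0_pi; rewrite mulr_gt0 ?pi_gt0 // -[ltRHS]mulr1 ltr_pM2l ?pi_gt0.
by rewrite -normr_eq0 -[pi * x](subrK (pi * k%:~R)) norm_sinDpi_int -mulrBr normr_eq0 gt_eqF.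
Qed.

End ScaledTrigonometry.

Lemma horner_PpolyS (R : realType) (j : nat) (c : R) :
  (Ppoly R j.+1).[c] =
    - (j.+1%:R * c * (Ppoly R j).[c] + (1 - c ^+ 2) * (Ppoly R j)^`().[c]).
Proof. by rewrite /= !hornerE. Qed.

Section CotpiDerivatives.
Context {R : realType}.
Implicit Types y : R.

Definition cotpi_derivn_formula (j : nat) y : R :=
  pi ^+ j * (Ppoly R j).[cos (pi * y)] / sin (pi * y) ^+ j.+1.

Lemma is_derive_cotpi_derivn_formula j y : sin (pi * y) != 0 ->
  is_derive y 1 (cotpi_derivn_formula j) (cotpi_derivn_formula j.+1 y).
Proof.
move=> s0.
have dP := is_derive1_comp (is_derive_poly (Ppoly R j) _) (is_derive_cos_scale pi y).
have dS := is_deriveX j.+1 (is_derive_sin_scale pi y); rewrite exprfctE in dS.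
have dSV := is_deriveV (f := fun z => sin (pi * z) ^+ j.+1) (expf_neq0 j.+1 s0) dS.
apply: is_derive_eq (is_deriveM (is_deriveZ (pi ^+ j) dP) dSV) _.
rewrite /cotpi_derivn_formula horner_PpolyS /=.
have pyth := cos2sin2 (pi * y).
set c := cos (pi * y) in pyth *; set s := sin (pi * y) in s0 pyth *.
rewrite pyth /GRing.scale /= !exprS.
have S0 : s ^+ j != 0 by rewrite expf_neq0.
by field; rewrite s0 S0.
Qed.

Lemma derive1n_cotpi j y : sin (pi * y) != 0 ->
  derive1n j (@cotpi R) y = cotpi_derivn_formula j y.
Proof.
elim: j y => [|j IH] y s0.
  by rewrite /cotpi_derivn_formula /cotpi /= hornerX expr0 mul1r expr1.
rewrite derive1nS derive1E (@near_eq_derive _ _ _ _ (cotpi_derivn_formula j)).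
  by case: (is_derive_cotpi_derivn_formula j y s0).
have near_s0 : \forall z \near y, sin (pi * z) != 0.
  exact: cvgr_neq0 (continuous_sin_scale pi y) s0.
by apply: filterS near_s0 => z /IH.
Qed.

End CotpiDerivatives.

Theorem lemma4p2 (R : realType) (j : nat) (x : R) :
  (forall k : int, x != k%:~R) ->
  (Ppoly R j).[cos (pi * x)] =
    pi ^- j * sin (pi * x) ^+ j.+1 * derive1n j (@cotpi R) x.
Proof.
move=> x_notint; have s0 := sin_pi_neq0 x x_notint.
rewrite derive1n_cotpi // /cotpi_derivn_formula.
have pi0 : (pi : R) ^+ j != 0 by rewrite expf_neq0 // gt_eqF // pi_gt0.
have S0 : sin (pi * x) ^+ j.+1 != 0 by rewrite expf_neq0.
by field; rewrite pi0 S0.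
Qed.
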